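(* Let $r\ge 2$, $t\ge 2$, and let $G$ be an $(r,t,a_0)$-staircase graph of girth at least $t+1$. Then $a_0\ge r+1$.
   Context: Staircase graph: Let $r\ge 2$ and $t\ge 2$ be integers, $s=\lfloor (t-1)/2\rfloor$, and $a_0$ a positive integer; if $t$ is odd assume $t\ge 3$. An $(r,t,a_0)$-staircase graph is a finite simple graph $G$ whose vertex set is a disjoint union $\{v_\infty\}\cup V_0\cup V_1\cup\cdots\cup V_s$ such that: $|V_0|=a_0$ and $v_\infty$ is adjacent to every vertex of $V_0$ and to no other vertex; for each $i$ with $0\le i\le s-1$ (if $t$ is even) or $0\le i\le s-2$ (if $t$ is odd), every vertex of $V_i$ has exactly $r$ neighbours in $V_{i+1}$ and every vertex of $V_{i+1}$ has exactly one neighbour in $V_i$; if $t$ is even, every vertex of $V_s$ has exactly $r$ neighbours in $V_s$; if $t$ is odd, every vertex of $V_{s-1}$ has exactly $r$ neighbours in $V_s$ and every vertex of $V_s$ has exactly $r+1$ neighbours in $V_{s-1}$; and there are no other edges. Girth: length of a shortest cycle ($\infty$ if there is none). *)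

From mathcomp Require Import all_boot.
Set Implicit Arguments. Unset Strict Implicit. Unset Printing Implicit Defensive.

Definition simple_graph (T : finType) (e : rel T) : Prop :=
  symmetric e /\ irreflexive e.

Definition girth_at_least (T : finType) (e : rel T) (g : nat) : Prop :=
  forall p : seq T, uniq p -> 3 <= size p -> cycle e p -> g <= size p.

Definition level_set (T : finType) (vinf : T) (lev : T -> nat) (i : nat)
  : {set T} := [set x | (x != vinf) && (lev x == i)].

Definition nbrs_in (T : finType) (e : rel T) (x : T) (A : {set T}) : nat :=
  #|[set y in A | e x y]|.

(* (r,t,a0)-staircase graph structure on (T,e): the vertex set is
   {vinf} ⊔ V_0 ⊔ ... ⊔ V_s, with V_i = level_set vinf lev i and s = (t-1)/2. *)
Definition staircase (T : finType) (e : rel T) (r t a0 : nat)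
  (vinf : T) (lev : T -> nat) : Prop :=
  let s := (t.-1)./2 in
  let V := level_set vinf lev in
      (forall x, x != vinf -> lev x <= s) /\
      (0 < a0 /\ #|V 0| = a0) /\
      (forall x, e vinf x = (x \in V 0)) /\
      (forall i, (if odd t then i.+1 < s else i < s) ->
         (forall x, x \in V i -> nbrs_in e x (V i.+1) = r) /\
         (forall y, y \in V i.+1 -> nbrs_in e y (V i) = 1)) /\
      (if odd t then
         (forall x, x \in V s.-1 -> nbrs_in e x (V s) = r) /\
         (forall y, y \in V s -> nbrs_in e y (V s.-1) = r.+1)
       else forall x, x \in V s -> nbrs_in e x (V s) = r) /\
      (forall x y, x != vinf -> y != vinf -> e x y ->
         [|| lev y == (lev x).+1, lev x == (lev y).+1 |
             [&& ~~ odd t, lev x == s & lev y == s]]).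

(* Every vertex of V_k, k >= 1, has a unique neighbour in V_(k-1), so following parents down
   to V_0 defines an ancestor map on each level. Two distinct vertices of V_k with the same
   ancestor are joined through the levels below k by a path with fewer than 2k interior
   vertices; closing it up through one or two vertices of level >= k gives a cycle of length at
   most 2k+2. Hence, if the girth exceeds 2k+2, the ancestor map is injective on the closed
   neighbourhood of any vertex x of level >= k, intersected with V_k. For odd t = 2s+1 apply
   this with k = s-1 to the r+1 lower neighbours of a vertex of V_s; for even t = 2s+2 apply it
   with k = s to a vertex of V_s together with its r neighbours in V_s. Either way r+1 vertices
   have distinct ancestors in V_0. *)
From mathcomp Require Import all_boot zify.
Set Implicit Arguments. Unset Strict Implicit. Unset Printing Implicit Defensive.

Lemma nbrs_in_gt0P (T : finType) (e : rel T) (x : T) (A : {set T}) :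
  reflect (exists2 y, y \in A & e x y) (0 < nbrs_in e x A).
Proof.
apply: (iffP card_gt0P) => [[y]|[y yA exy]]; first by rewrite inE => /andP[]; exists y.
by exists y; rewrite inE yA.
Qed.

Section Ancestors.
Variables (T : finType) (e : rel T) (vinf : T) (lev : T -> nat).
Local Notation V := (level_set vinf lev).

Lemma in_level_set k y : (y \in V k) = (y != vinf) && (lev y == k).
Proof. by rewrite inE. Qed.

Lemma level_set_nonempty r M : 0 < r ->
  (forall i, i < M -> forall x, x \in V i -> nbrs_in e x (V i.+1) = r) ->
  V 0 != set0 -> V M != set0.
Proof.
move=> r_gt0; elim: M => [//|M IH] growV V0.
have /set0Pn[x xVM] := IH (fun i lt_iM => growV i (ltnW lt_iM)) V0.
have /nbrs_in_gt0P[y yVM1 _] : 0 < nbrs_in e x (V M.+1) by rewrite growV.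
by apply/set0Pn; exists y.
Qed.

Definition parent (y : T) : T := odflt y [pick z in V (lev y).-1 | e y z].

Definition ancestor k : T -> T := iter k parent.

Lemma parentP k y : y \in V k.+1 -> nbrs_in e y (V k) = 1 ->
  parent y \in V k /\ e y (parent y).
Proof.
rewrite in_level_set => /andP[_ /eqP lev_y] one_parent.
have /nbrs_in_gt0P[z zV eyz] : 0 < nbrs_in e y (V k) by rewrite one_parent.
rewrite /parent lev_y; case: pickP => [p /andP[]//|none].
by have := none z; rewrite zV eyz.
Qed.

Variable K : nat.
Hypothesis unique_parent : forall i, i < K -> forall y, y \in V i.+1 ->
  nbrs_in e y (V i) = 1.

Lemma parent_below k y : k < K -> y \in V k.+1 ->
  parent y \in V k /\ e y (parent y).
Proof. by move=> lt_kK yV; apply: parentP yV (unique_parent lt_kK yV). Qed.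

Lemma ancestor_root k y : k <= K -> y \in V k -> ancestor k y \in V 0.
Proof.
elim: k y => [//|k IH] y le_kK yV.
by rewrite /ancestor iterSr; apply: IH; [lia | case: (parent_below le_kK yV)].
Qed.

Hypothesis e_sym : symmetric e.

Lemma common_ancestor_path k y z : k <= K -> y \in V k -> z \in V k -> y != z ->
  ancestor k y = ancestor k z ->
  exists q, [/\ path e y (rcons q z), uniq q, 0 < size q, size q < k.*2 &
                forall v, v \in q -> lev v < k].
Proof.
elim: k y z => [|k IH] y z le_kK yV zV neq_yz.
  by move=> /= eq_yz; rewrite eq_yz eqxx in neq_yz.
case: (parent_below le_kK yV) (parent_below le_kK zV) => pyV eypy [pzV ezpz].
have below_k v : v \in V k -> lev v < k.+1 by rewrite in_level_set => /andP[_ /eqP ->].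
have not_in_q (q : seq T) : (forall v, v \in q -> lev v < k) -> forall v, v \in V k -> v \notin q.
  move=> qlow v; rewrite in_level_set => /andP[_ /eqP lv]; apply/negP => /qlow; lia.
case: (eqVneq (parent y) (parent z)) => [eq_p _ | neq_p].
  exists [:: parent y]; split=> //=; first by rewrite eypy eq_p e_sym ezpz.
  by move=> v; rewrite inE => /eqP ->; apply: below_k.
rewrite /ancestor !iterSr => /(IH _ _ (ltnW le_kK) pyV pzV neq_p)[q [pq uq q_gt0 q_lt qlow]].
exists (parent y :: rcons q (parent z)); split.
- by rewrite rcons_cons /= eypy rcons_path pq last_rcons e_sym ezpz.
- rewrite /= rcons_uniq uq (not_in_q q qlow _ pzV) mem_rcons inE negb_or neq_p.
  by rewrite (not_in_q q qlow _ pyV).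
- by [].
- by rewrite /= size_rcons doubleS !ltnS.
- move=> v; rewrite inE mem_rcons inE => /or3P[/eqP ->|/eqP ->|/qlow]; last by lia.
  + exact: below_k.
  + exact: below_k.
Qed.

Lemma common_ancestor_cycle g k y z p : girth_at_least e g -> k <= K ->
  y \in V k -> z \in V k -> ancestor k y = ancestor k z ->
  uniq (z :: rcons p y) -> (forall v, v \in p -> k <= lev v) ->
  path e z (rcons p y) -> g <= size p + k.*2.+1.
Proof.
move=> girth le_kK yV zV anc_yz uzpy phigh pzy.
have /and3P[zpy yp up] : [&& z \notin rcons p y, y \notin p & uniq p].
  by rewrite -rcons_uniq.
have neq_yz : y != z by apply: contraNneq zpy => ->; rewrite mem_rcons mem_head.
have [q [pyq uq q_gt0 q_lt qlow]] := common_ancestor_path le_kK yV zV neq_yz anc_yz.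
have [lyk lzk] : lev y = k /\ lev z = k.
  by move: yV zV; rewrite !in_level_set => /andP[_ /eqP ->] /andP[_ /eqP ->].
have notq v : k <= lev v -> v \notin q by move=> hv; apply/negP => /qlow; lia.
suff: g <= size (y :: rcons q z ++ p) by rewrite /= size_cat size_rcons; lia.
apply: girth.
- rewrite /= cat_uniq rcons_uniq uq notq ?lzk //; apply/and4P; split=> //.
    by rewrite mem_cat mem_rcons inE !negb_or neq_yz notq ?lyk.
  rewrite -all_predC; apply/allP => v vp /=; rewrite mem_rcons inE negb_or notq ?phigh //.
  by rewrite andbT; apply: contraNneq zpy => <-; rewrite mem_rcons inE vp orbT.
- by rewrite /= size_cat size_rcons; lia.
- by rewrite /= rcons_cat cat_path pyq last_rcons.
Qed.

Hypothesis e_irr : irreflexive e.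

Lemma ancestor_inj_closed_nbhd g k x (S : {set T}) :
  girth_at_least e g -> k.*2.+3 <= g -> k <= K -> k <= lev x ->
  S \subset V k -> (forall y, y \in S -> y = x \/ e x y) ->
  {in S &, injective (ancestor k)}.
Proof.
move=> girth g_big le_kK le_kx /subsetP SV Sx y z yS zS anc_yz.
apply/eqP; apply: contraTT g_big => neq_yz; rewrite -ltnNge ltnS.
have [yV zV] := (SV _ yS, SV _ zS).
have cycle_bound p : uniq (z :: rcons p y) -> (forall v, v \in p -> k <= lev v) ->
    path e z (rcons p y) -> size p <= 1 -> g <= k.*2.+2.
  move=> uzpy phigh pzy small_p.
  by apply: leq_trans (common_ancestor_cycle girth le_kK yV zV anc_yz uzpy phigh pzy) _; lia.
have neq_x v : e x v -> x != v by apply: contraTneq => <-; rewrite e_irr.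
case: (Sx _ yS) (Sx _ zS) => [eyx|exy] [ezx|exz].
- by rewrite eyx ezx eqxx in neq_yz.
- apply: (cycle_bound [::]) => //=; last by rewrite andbT eyx e_sym exz.
  by rewrite inE andbT eq_sym neq_yz.
- apply: (cycle_bound [::]) => //=; last by rewrite andbT ezx.
  by rewrite inE andbT eq_sym neq_yz.
- apply: (cycle_bound [:: x]); rewrite /= ?exy ?andbT.
  + by rewrite !inE negb_or eq_sym neq_x // eq_sym neq_yz neq_x.
  + by move=> v; rewrite inE => /eqP ->.
  + by rewrite e_sym exz.
  + by [].
Qed.

Lemma card_closed_nbhd_le_root g k x (S : {set T}) :
  girth_at_least e g -> k.*2.+3 <= g -> k <= K -> k <= lev x ->
  S \subset V k -> (forall y, y \in S -> y = x \/ e x y) -> #|S| <= #|V 0|.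
Proof.
move=> girth g_big le_kK le_kx SV Sx.
rewrite -(card_in_imset (ancestor_inj_closed_nbhd girth g_big le_kK le_kx SV Sx)).
apply/subset_leq_card/subsetP => _ /imsetP[y yS ->].
exact: ancestor_root le_kK (subsetP SV _ yS).
Qed.

End Ancestors.

Section StaircaseTop.
Variables (T : finType) (e : rel T) (vinf : T) (lev : T -> nat) (r s : nat).
Local Notation V := (level_set vinf lev).
Hypotheses (e_sym : symmetric e) (e_irr : irreflexive e).
Hypotheses (r_gt0 : 0 < r) (V0_ne : V 0 != set0).

Lemma odd_staircase_root_bound : 0 < s -> girth_at_least e s.*2.+2 ->
  (forall i, i.+1 < s ->
     (forall x, x \in V i -> nbrs_in e x (V i.+1) = r) /\
     (forall y, y \in V i.+1 -> nbrs_in e y (V i) = 1)) ->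
  (forall x, x \in V s.-1 -> nbrs_in e x (V s) = r) ->
  (forall y, y \in V s -> nbrs_in e y (V s.-1) = r.+1) ->
  r.+1 <= #|V 0|.
Proof.
move=> s_gt0 girth tree top_down top_up.
have grow i : i < s.-1 -> forall x, x \in V i -> nbrs_in e x (V i.+1) = r.
  by move=> lt_is; apply: (tree i _).1; lia.
have parents i : i < s.-1 -> forall y, y \in V i.+1 -> nbrs_in e y (V i) = 1.
  by move=> lt_is; apply: (tree i _).2; lia.
have /set0Pn[x1 x1V] := level_set_nonempty r_gt0 grow V0_ne.
have /nbrs_in_gt0P[x xV _] : 0 < nbrs_in e x1 (V s) by rewrite top_down.
rewrite -(top_up x xV).
apply: (card_closed_nbhd_le_root (k := s.-1) (x := x) parents e_sym e_irr girth).
- lia.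
- by [].
- by move: xV; rewrite in_level_set => /andP[_ /eqP ->]; apply: leq_pred.
- by apply/subsetP => y /setIdP[].
- by move=> y /setIdP[_ exy]; right.
Qed.

Lemma even_staircase_root_bound : girth_at_least e s.*2.+3 ->
  (forall i, i < s ->
     (forall x, x \in V i -> nbrs_in e x (V i.+1) = r) /\
     (forall y, y \in V i.+1 -> nbrs_in e y (V i) = 1)) ->
  (forall x, x \in V s -> nbrs_in e x (V s) = r) ->
  r.+1 <= #|V 0|.
Proof.
move=> girth tree top.
have /set0Pn[x xV] := level_set_nonempty r_gt0 (fun i lt_is => (tree i lt_is).1) V0_ne.
have x_notin : x \notin [set y in V s | e x y] by rewrite inE e_irr andbF.
have <- : #|x |: [set y in V s | e x y]| = r.+1.
  by rewrite cardsU1 x_notin; apply: (congr1 S (top x xV)).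
have parents i := fun lt_is : i < s => (tree i lt_is).2.
apply: (card_closed_nbhd_le_root (k := s) (x := x) parents e_sym e_irr girth).
- by [].
- by [].
- by move: xV; rewrite in_level_set => /andP[_ /eqP ->].
- by apply/subsetP => y /setU1P[->|/setIdP[]].
- by move=> y /setU1P[->|]; [left | move=> /setIdP[_ exy]; right].
Qed.

End StaircaseTop.

Lemma pred_half_double t : 0 < t -> t = (t.-1)./2.*2 + (if odd t then 1 else 2).
Proof. by case: t => // t _ /=; have := odd_double_half t; case: (odd t) => /=; lia. Qed.

Theorem mainTheorem6 (T : finType) (e : rel T) (r t a0 : nat)
  (vinf : T) (lev : T -> nat) :
  2 <= r -> 2 <= t ->
  simple_graph e ->
  staircase e r t a0 vinf lev ->
  girth_at_least e t.+1 ->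
  r.+1 <= a0.
Proof.
move=> r_ge2 t_ge2 [e_sym e_irr] [_ [[a0_gt0 cardV0] [_ [tree [top _]]]]] girth.
have V0_ne : level_set vinf lev 0 != set0 by rewrite -card_gt0 cardV0.
have t_eq := pred_half_double (ltnW t_ge2); rewrite -cardV0.
case: (odd t) t_eq tree top => /= t_eq tree top; rewrite t_eq ?addn1 ?addn2 in girth.
- have s_gt0 : 0 < (t.-1)./2 by lia.
  exact: odd_staircase_root_bound (ltnW r_ge2) V0_ne s_gt0 girth tree top.1 top.2.
- exact: even_staircase_root_bound (ltnW r_ge2) V0_ne girth tree top.
Qed.
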